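(* $\mathcal{OBLOT}^{S}_{\mathcal{F.V.}} > \mathcal{OBLOT}^{S}_{\mathcal{L.V.}}$, i.e. the model $\mathcal{OBLOT}$ under the semi-synchronous scheduler with full visibility is computationally more powerful than the model $\mathcal{OBLOT}$ under the semi-synchronous scheduler with limited visibility.
   Context: Robots are anonymous, identical, autonomous computational entities viewed as points moving in the Euclidean plane. Each has its own local coordinate system, with no agreement between robots and no common chirality, and perceives itself at its origin. Robots operate in Look-Compute-Move cycles. In Look a robot takes an instantaneous snapshot of the positions (and visible lights, if any) of the robots it can see. In Compute it runs the common algorithm on the snapshot to obtain a destination. In Move it moves there. Models: - $\mathcal{OBLOT}$: robots are oblivious (no memory of previous cycles) and silent (no means of communication). - $\mathcal{LUMI}$: each robot carries a persistent light whose color is taken from a finite set and is set at the end of Compute; the light is visible to the robot itself and to the other robots. - $\mathcal{FSTA}$: the light is internal, visible only to its owner. It acts as a finite persistent state; there is no communication. - $\mathcal{FCOM}$: the light is visible only to the other robots. A robot does not see its own light and is otherwise oblivious. Schedulers: time is divided into rounds. Under the semi-synchronous scheduler $S$ (SSYNCH), in each round an adversarially chosen set of robots is activated and they perform one full cycle in perfect synchronization; every robot is activated infinitely often. Under the fully synchronous scheduler $F$ (FSYNCH), every robot is activated in every round. Visibility: - Full visibility $\mathcal{F.V.}$: every robot sees all robots. - Limited visibility $\mathcal{L.V.}$: a robot sees only the robots within a fixed distance $V_r$ of its current position, with $V_r$ the same for all robots. The visibility graph (robots adjacent iff they see each other) of the initial configuration is assumed connected. Relations: $\mathcal{M}^X_V$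 denotes model $\mathcal{M}$ under scheduler $X$ with visibility $V$. For a team $R$ of robots, $Task(\mathcal{M},X,V;R)$ is the set of problems (tasks where robots must form some configuration(s) subject to conditions) solvable by $R$ in that setting. $\mathcal{R}$ is the set of all teams, and $\mathcal{R}_n$ the set of teams of size $n$. - $\mathcal{M}^{X_1}_{V_1} \ge \mathcal{N}^{X_2}_{V_2}$ if for all $R\in\mathcal{R}$, $Task(\mathcal{M},X_1,V_1;R)\supseteq Task(\mathcal{N},X_2,V_2;R)$. - $>$ means $\ge$ holds and there exists $R\in\mathcal{R}$ with $Task(\mathcal{M},X_1,V_1;R)\setminus Task(\mathcal{N},X_2,V_2;R)\neq\emptyset$. - $\perp$ (incomparable) means there exist $R_1,R_2\in\mathcal{R}$ with $Task(\mathcal{M},X_1,V_1;R_1)\setminus Task(\mathcal{N},X_2,V_2;R_1)\neq\emptyset$ and $Task(\mathcal{N},X_2,V_2;R_2)\setminus Task(\mathcal{M},X_1,V_1;R_2)\neq\emptyset$. *)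

From Stdlib Require Import Reals Relations.
From mathcomp Require Import ssreflect ssrbool ssrfun eqtype ssrnat fintype.



Unset Printing Implicit Defensive.

Local Open Scope R_scope.

Definition point : Type := (R * R)%type.

Definition dist (p q : point) : R :=
  sqrt ((fst p - fst q) ^ 2 + (snd p - snd q) ^ 2).

(** A local coordinate system, up to its origin (which is always the
    robot's current position): an arbitrary invertible similarity of the
    plane, i.e. rotation + scaling (a,b) <> (0,0), possibly composed with a
    reflection (no common chirality). *)
Record frame : Type := mkFrame {
  fa : R; fb : R; frefl : bool;
  fnz : fa * fa + fb * fb <> 0 }.

Definition lin (f : frame) (v : point) : point :=
  let x := fst v in
  let y := if frefl f then - snd v else snd v in
  (fa f * x - fb f * y, fb f * x + fa f * y).

Definition to_local (f : frame) (me p : point) : point :=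
  lin f (fst p - fst me, snd p - snd me).

(** Length scaling factor of the frame: a global length [l] measures
    [frame_scale f * l] in local units. *)
Definition frame_scale (f : frame) : R := sqrt (fa f * fa f + fb f * fb f).

Record team : Type := mkTeam {
  tsize : nat;
  tVr : R;
  tVr_pos : 0 < tVr }.

Definition config (n : nat) : Type := 'I_n -> point.

(** An execution: the sequence of global configurations at the beginning
    of each round. *)
Definition execution (n : nat) : Type := nat -> config n.

Definition problem (Rt : team) : Type := execution (tsize Rt) -> Prop.

Inductive scheduler : Type := SSYNCH | FSYNCH.
Inductive visibility : Type := FullVis | LimitedVis.

Definition activation (n : nat) : Type := nat -> 'I_n -> bool.

Definition sched_ok (X : scheduler) (n : nat) (act : activation n) : Prop :=
  match X with
  | SSYNCH =>
      (forall t, exists i, act t i) /\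
      (forall i t, exists t', (t <= t')%nat /\ act t' i)
  | FSYNCH => forall t i, act t i
  end.

Definition sees (V : visibility) (Vr : R) (p q : point) : Prop :=
  match V with
  | FullVis => True
  | LimitedVis => dist p q <= Vr
  end.

(** Robots are anonymous and there is
    no multiplicity detection, so a snapshot is a set of points. *)
Definition snapshot (V : visibility) (Vr : R) n (f : frame) (C : config n)
    (i : 'I_n) : point -> Prop :=
  fun q => exists j : 'I_n, sees V Vr (C i) (C j) /\ q = to_local f (C i) (C j).

(** An OBLOT algorithm: from the (known) visibility radius expressed in the
    robot's local unit and the snapshot, compute a destination in local
    coordinates.  No memory, no lights. *)
Definition oblot_algorithm : Type := R -> (point -> Prop) -> point.

(** [E] is an execution of algorithm [A] (rigid moves): an activated robot
    Looks at the configuration of the beginning of the round and moves to its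
    computed destination; inactive robots stay put. *)
Definition oblot_exec (V : visibility) (Vr : R) n (A : oblot_algorithm)
    (F : 'I_n -> frame) (act : activation n) (E : execution n) : Prop :=
  forall (t : nat) (i : 'I_n),
    if act t i then
      to_local (F i) (E t i) (E t.+1 i)
        = A (frame_scale (F i) * Vr) (snapshot V Vr n (F i) (E t) i)
    else E t.+1 i = E t i.

Definition vis_connected (Vr : R) n (C : config n) : Prop :=
  forall i j : 'I_n,
    clos_refl_trans 'I_n (fun a b => dist (C a) (C b) <= Vr) i j.

Definition Task_OBLOT (X : scheduler) (V : visibility) (Rt : team)
    (P : problem Rt) : Prop :=
  exists A : oblot_algorithm,
    forall (F : 'I_(tsize Rt) -> frame) (act : activation (tsize Rt))
           (E : execution (tsize Rt)),
      sched_ok X (tsize Rt) act ->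
      vis_connected (tVr Rt) (tsize Rt) (E 0%nat) ->
      oblot_exec V (tVr Rt) (tsize Rt) A F act E ->
      P E.

Definition OBLOT_ge (X1 : scheduler) (V1 : visibility)
    (X2 : scheduler) (V2 : visibility) : Prop :=
  forall (Rt : team) (P : problem Rt),
    Task_OBLOT X2 V2 Rt P -> Task_OBLOT X1 V1 Rt P.

Definition OBLOT_gt (X1 : scheduler) (V1 : visibility)
    (X2 : scheduler) (V2 : visibility) : Prop :=
  OBLOT_ge X1 V1 X2 V2 /\
  exists (Rt : team) (P : problem Rt),
    Task_OBLOT X1 V1 Rt P /\ ~ Task_OBLOT X2 V2 Rt P.

From Stdlib Require Import Reals Relations Lra.
From Stdlib Require Import FunctionalExtensionality PropExtensionality ClassicalDescription.
From mathcomp Require Import ssreflect ssrbool ssrfun eqtype ssrnat fintype.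

(* Full visibility simulates limited visibility: a robot discards what lies
   outside its visibility disk, which in its own (similar) frame is the disk
   of radius [frame_scale f * V_r] around the origin.
   For strictness, put three robots with [V_r = 1] on a line, at 0, 1, 2
   ("spread") or at 0, 1, 1 ("stacked"), and require that a spread line stays
   still during the first round while a stacked one changes.  With full
   visibility a robot sees three distinct positions exactly on the spread
   line.  With limited visibility and every robot active, each robot of the
   stacked line sees what an end robot of the spread line sees (snapshots
   record positions, not multiplicities), so it stays as that robot does. *)

Local Open Scope R_scope.

Definition origin : point := (0, 0).

Definition axis (x : R) : point := (x, 0).

Definition displacement (me p : point) : point := (fst p - fst me, snd p - snd me).

Lemma axis_inj : injective axis.
Proof. by move=> a b []. Qed.

Lemma dist_sym p q : dist p q = dist q p.
Proof. by rewrite /dist; f_equal; ring. Qed.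

Lemma dist_refl p : dist p p = 0.
Proof. by rewrite /dist -sqrt_0; f_equal; ring. Qed.

Lemma dist_eq0 p q : dist p q = 0 -> p = q.
Proof.
case: p q => [x y] [x' y'] /sqrt_eq_0 H.
have {}H : (x - x') ^ 2 + (y - y') ^ 2 = 0.
  by apply: H; apply: Rplus_le_le_0_compat; apply: pow2_ge_0.
have sum_sq_eq0 a b : a ^ 2 + b ^ 2 = 0 -> a = 0 /\ b = 0 by move=> ?; split; nra.
by have [? ?] := sum_sq_eq0 _ _ H; f_equal; lra.
Qed.

Lemma dist_axis_le a b r : dist (axis a) (axis b) <= r <-> - r <= b - a <= r.
Proof.
have -> : dist (axis a) (axis b) = Rabs (a - b).
  by rewrite -sqrt_Rsqr_abs /dist /Rsqr /=; f_equal; ring.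
by split_Rabs; split; lra.
Qed.

Lemma frame_scale_gt0 f : 0 < frame_scale f.
Proof. by apply: sqrt_lt_R0; have := fnz f; nra. Qed.

Lemma to_localE f me p : to_local f me p = lin f (displacement me p).
Proof. by []. Qed.

Lemma to_local_self f me : to_local f me me = origin.
Proof. by rewrite /to_local /lin /origin /=; case: (frefl f); f_equal; ring. Qed.

Lemma dist_to_local f me p q :
  dist (to_local f me p) (to_local f me q) = frame_scale f * dist p q.
Proof.
rewrite /dist /frame_scale /to_local /lin /= -sqrt_mult_alt; last by nra.
by f_equal; case: (frefl f); ring.
Qed.

Lemma dist_origin_to_local f me p :
  dist origin (to_local f me p) = frame_scale f * dist me p.
Proof. by rewrite -(to_local_self f me) dist_to_local. Qed.

Lemma to_local_inj f me : injective (to_local f me).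
Proof.
move=> p q Hpq; apply: dist_eq0.
have := dist_to_local f me p q; rewrite Hpq dist_refl.
by have := frame_scale_gt0 f; nra.
Qed.

Definition restrict_to_disk (A : oblot_algorithm) : oblot_algorithm :=
  fun r S => A r (fun q => S q /\ dist origin q <= r).

Lemma snapshot_limited_full Vr n f (C : config n) i :
  snapshot LimitedVis Vr n f C i
  = fun q => snapshot FullVis Vr n f C i q /\ dist origin q <= frame_scale f * Vr.
Proof.
apply: functional_extensionality => q; apply: propositional_extensionality.
have Hf := frame_scale_gt0 f.
split.
- move=> [j [Hd ->]]; split; first by exists j.
  by rewrite dist_origin_to_local; apply: Rmult_le_compat_l (Rlt_le _ _ Hf) Hd.
- move=> [[j [_ ->]]]; rewrite dist_origin_to_local => Hd.
  by exists j; split; last by []; apply: Rmult_le_reg_l Hd.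
Qed.

Lemma Task_OBLOT_full_of_limited X Rt P :
  Task_OBLOT X LimitedVis Rt P -> Task_OBLOT X FullVis Rt P.
Proof.
move=> [A solves]; exists (restrict_to_disk A) => F act E Hsched Hconn Hexec.
apply: (solves F act E Hsched Hconn) => t i.
by move: (Hexec t i); case: (act t i) => // ->; rewrite snapshot_limited_full.
Qed.

Lemma OBLOT_ge_full_limited X : OBLOT_ge X FullVis X LimitedVis.
Proof. by move=> Rt P; apply: Task_OBLOT_full_of_limited. Qed.

Lemma oblot_exec_stays_iff {V Vr n A F act E t i} :
  oblot_exec V Vr n A F act E -> act t i ->
  E t.+1 i = E t i
  <-> A (frame_scale (F i) * Vr) (snapshot V Vr n (F i) (E t) i) = origin.
Proof.
move=> Hexec Hact; move: (Hexec t i); rewrite Hact => <-.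
rewrite -(to_local_self (F i) (E t i)).
by split=> [-> // |]; apply: to_local_inj.
Qed.

Lemma oblot_exec_still_iff {V Vr n A F act E} t :
  oblot_exec V Vr n A F act E ->
  E t.+1 = E t
  <-> forall i, act t i ->
      A (frame_scale (F i) * Vr) (snapshot V Vr n (F i) (E t) i) = origin.
Proof.
move=> Hexec; split=> [Hstill i Hact | Horigin].
  by apply/(oblot_exec_stays_iff Hexec Hact); rewrite Hstill.
apply: functional_extensionality => i; case Hact: (act t i).
  by apply/(oblot_exec_stays_iff Hexec Hact)/Horigin.
by move: (Hexec t i); rewrite Hact.
Qed.

Definition all_active n : activation n := fun _ _ => true.

Lemma sched_ok_all_active X n : sched_ok X n.+1 (all_active n.+1).
Proof. by case: X => //; split=> [t | i t]; [exists ord0 | exists t]. Qed.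

Definition frame_id : frame := mkFrame 1 0 false ltac:(lra).

Lemma to_local_id me p : to_local frame_id me p = displacement me p.
Proof. by rewrite /to_local /lin /displacement /=; f_equal; ring. Qed.

Fixpoint synchronous_run V Vr n (A : oblot_algorithm) (C : config n) t : config n :=
  match t with
  | 0%nat => C
  | t.+1 =>
      let C' := synchronous_run V Vr n A C t in
      fun i =>
        let d := A (frame_scale frame_id * Vr) (snapshot V Vr n frame_id C' i) in
        (fst (C' i) + fst d, snd (C' i) + snd d)
  end.

Lemma synchronous_run_exec V Vr n A C :
  oblot_exec V Vr n A (fun _ => frame_id) (all_active n) (synchronous_run V Vr n A C).
Proof.
move=> t i /=; rewrite to_local_id /displacement /=.
by case: (A _ _) => dx dy /=; f_equal; ring.
Qed.

Definition view V Vr n (C : config n) (i : 'I_n) : point -> Prop :=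
  fun v => exists j, sees V Vr (C i) (C j) /\ v = displacement (C i) (C j).

Lemma snapshot_eq_of_view {V Vr n m f} {C : config n} {C' : config m} {i i'} :
  view V Vr n C i = view V Vr m C' i' ->
  snapshot V Vr n f C i = snapshot V Vr m f C' i'.
Proof.
have sub k l (D : config k) (D' : config l) a a' :
    view V Vr k D a = view V Vr l D' a' ->
    forall q, snapshot V Vr k f D a q -> snapshot V Vr l f D' a' q.
  move=> Hv q [j [Hs ->]].
  have [j' [Hs' Hd]] : view V Vr l D' a' (displacement (D a) (D j)).
    by rewrite -Hv; exists j.
  by exists j'; rewrite !to_localE Hd.
move=> Hv; apply: functional_extensionality => q; apply: propositional_extensionality.
by split; apply: sub.
Qed.

Definition axis_config n (c : 'I_n -> R) : config n := fun i => axis (c i).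

Lemma view_axis_config Vr n (c : 'I_n -> R) i v :
  view LimitedVis Vr n (axis_config n c) i v
  <-> snd v = 0 /\ exists j, - Vr <= c j - c i <= Vr /\ fst v = c j - c i.
Proof.
split=> [[j [/dist_axis_le Hd ->]] | [Hv [j [Hd Hj]]]].
  by split; [rewrite /=; ring | exists j].
exists j; split; first exact/dist_axis_le.
by case: v Hv Hj => x y /= -> ->; rewrite /displacement /=; f_equal; ring.
Qed.

Lemma vis_connected_star {Vr n} {C : config n} hub :
  (forall i, dist (C i) (C hub) <= Vr) -> vis_connected Vr n C.
Proof.
move=> near i j; apply: (rt_trans _ _ _ hub); apply: rt_step; first exact: near.
by rewrite dist_sym; apply: near.
Qed.

Definition r0 : 'I_3 := @Ordinal 3 0 isT.
Definition r1 : 'I_3 := @Ordinal 3 1 isT.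
Definition r2 : 'I_3 := @Ordinal 3 2 isT.

Lemma ord3_cases (j : 'I_3) : j = r0 \/ j = r1 \/ j = r2.
Proof.
by case: j => [[|[|[|m]]] Hm] //; [left | right; left | right; right]; apply: val_inj.
Qed.

Lemma exists_ord3 (P : 'I_3 -> Prop) : (exists j, P j) <-> P r0 \/ P r1 \/ P r2.
Proof.
split=> [[j]|]; last by case=> [|[|]]; eexists; eassumption.
by case: (ord3_cases j) => [|[|]] ->; tauto.
Qed.

Definition trio : team := mkTeam 3 1 Rlt_0_1.

Definition spread : config 3 := axis_config 3 (fun i => INR i).

Definition stacked : config 3 := axis_config 3 (fun i => INR (minn i 1)).

Definition stay_spread_move_stacked : problem trio := fun E =>
  (E 0%nat = spread -> E 1%nat = spread) /\ (E 0%nat = stacked -> E 1%nat <> stacked).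

Lemma axis_connected (c : 'I_3 -> R) :
  (forall i, - 1 <= c i - c r1 <= 1) -> vis_connected 1 3 (axis_config 3 c).
Proof.
move=> near; apply: (vis_connected_star r1) => i.
by apply/dist_axis_le; have := near i; lra.
Qed.

Lemma spread_connected : vis_connected 1 3 spread.
Proof. by apply: axis_connected => i; case: (ord3_cases i) => [|[|]] -> /=; lra. Qed.

Lemma stacked_connected : vis_connected 1 3 stacked.
Proof. by apply: axis_connected => i; case: (ord3_cases i) => [|[|]] -> /=; lra. Qed.

Definition has_three_points (S : point -> Prop) : Prop :=
  exists x y z, S x /\ S y /\ S z /\ x <> y /\ y <> z /\ x <> z.

Lemma snapshot_full_three {Vr n f} {C : config n} {i} j1 j2 j3 :
  C j1 <> C j2 -> C j2 <> C j3 -> C j1 <> C j3 ->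
  has_three_points (snapshot FullVis Vr n f C i).
Proof.
move=> H12 H23 H13.
exists (to_local f (C i) (C j1)), (to_local f (C i) (C j2)), (to_local f (C i) (C j3)).
split; first by exists j1. split; first by exists j2. split; first by exists j3.
by split; [|split]; move/to_local_inj.
Qed.

Lemma snapshot_two_sites {V Vr n f} {C : config n} {i} p q :
  (forall j, C j = p \/ C j = q) -> ~ has_three_points (snapshot V Vr n f C i).
Proof.
move=> sites [x [y [z [[jx [_ ->]] [[jy [_ ->]] [[jz [_ ->]] Hdistinct]]]]]].
move: Hdistinct.
by case: (sites jx) => ->; case: (sites jy) => ->; case: (sites jz) => ->; tauto.
Qed.

Definition stay_on_three_points : oblot_algorithm := fun _ S =>
  if excluded_middle_informative (has_three_points S) then origin else axis 1.

Lemma full_solves : Task_OBLOT SSYNCH FullVis trio stay_spread_move_stacked.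
Proof.
exists stay_on_three_points => F act E Hsched _ Hexec; split=> E0.
  rewrite -E0; apply/(oblot_exec_still_iff 0 Hexec) => i _.
  rewrite /stay_on_three_points E0; case: excluded_middle_informative => // [[]].
  by apply: (snapshot_full_three r0 r1 r2) => /axis_inj /=; lra.
case: Hsched => /(_ 0%nat) [i Hact] _ E1.
have := (oblot_exec_still_iff 0 Hexec).1 (etrans E1 (esym E0)) i Hact.
rewrite /stay_on_three_points E0.
case: excluded_middle_informative => [Hthree _ | _ []]; last lra.
apply: (snapshot_two_sites (axis 0) (axis 1)) Hthree => j.
by case: (ord3_cases j) => [|[|]] ->; [left | right | right].
Qed.

Lemma stacked_views_in_spread i :
  exists j, view LimitedVis 1 3 stacked i = view LimitedVis 1 3 spread j.
Proof.
case: (ord3_cases i) => [|[|]] ->; [exists r0 | exists r2 | exists r2];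
  apply: functional_extensionality => v; apply: propositional_extensionality;
  rewrite !view_axis_config !exists_ord3 /=; lra.
Qed.

Lemma limited_fails : ~ Task_OBLOT SSYNCH LimitedVis trio stay_spread_move_stacked.
Proof.
move=> [A solves].
have run_exec C := synchronous_run_exec LimitedVis 1 3 A C.
have solves_run C : vis_connected 1 3 C ->
    stay_spread_move_stacked (synchronous_run LimitedVis 1 3 A C).
  by move=> HC; apply: solves (sched_ok_all_active SSYNCH 2) HC (run_exec C).
have spread_origin :=
  (oblot_exec_still_iff 0 (run_exec spread)).1 ((solves_run _ spread_connected).1 erefl).
have [_ stacked_moves] := solves_run _ stacked_connected.
apply: (stacked_moves erefl).
apply/(oblot_exec_still_iff 0 (run_exec stacked)) => i _.
have [j Hj] := stacked_views_in_spread i.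
by rewrite (snapshot_eq_of_view Hj); apply: spread_origin.
Qed.

Theorem theorem2 : OBLOT_gt SSYNCH FullVis SSYNCH LimitedVis.
Proof.
split; first exact: OBLOT_ge_full_limited.
by exists trio, stay_spread_move_stacked; split; [apply: full_solves | apply: limited_fails].
Qed.
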